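(* For every integer $n\ge2$ and every prime power $q$, $$f(n,q)\ge\frac{(q^{n+1}-1)(q^{n-1}-1)}{(q^2-1)^2}.$$
   Context: $f(n,q)$ is the smallest size of a set of lines of $\mathrm{PG}(n,q)$ (the $n$-dimensional projective space over $\mathbb F_q$) such that every plane contains at least one line of the set. *)

From mathcomp Require Import all_boot all_order all_algebra.
Set Implicit Arguments. Unset Strict Implicit. Unset Printing Implicit Defensive.
Import GRing.Theory.
Local Open Scope ring_scope.

(* Points of PG(n,q) are 1-dim subspaces of F^(n+1) (F a finite field, |F| = q);
   projective k-spaces are (k+1)-dim vector subspaces.  We represent a vector
   subspace by its finite set of vectors. *)
Definition vec (F : finFieldType) (n : nat) := 'rV[F]_(n.+1).

Definition is_subspace (F : finFieldType) (n k : nat) (A : {set vec F n}) : bool :=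
  [exists M : 'M[F]_(k, n.+1), (\rank M == k) && (A == [set v | (v <= M)%MS])].

Definition is_line (F : finFieldType) (n : nat) (A : {set vec F n}) := @is_subspace F n 2%N A.
Definition is_plane (F : finFieldType) (n : nat) (A : {set vec F n}) := @is_subspace F n 3%N A.

Definition covers_planes (F : finFieldType) (n : nat) (L : {set {set vec F n}}) : bool :=
  [forall l in L, is_line l] &&
  [forall P : {set vec F n}, is_plane P ==> [exists l in L, l \subset P]].

Definition all_lines (F : finFieldType) (n : nat) : {set {set vec F n}} :=
  [set l | is_line l].

Definition f (F : finFieldType) (n : nat) : nat :=
  #|[arg min_(L < all_lines F n | covers_planes L) #|L|]|.

From mathcomp Require Import all_boot all_order all_algebra.
From mathcomp Require Import zify.
Set Implicit Arguments. Unset Strict Implicit. Unset Printing Implicit Defensive.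
Import GRing.Theory Num.Theory.

(* Let L be a set of lines such that every plane contains one of them, and for
   a nonzero vector v let d(v) be the number of lines of L through v.  A line m
   outside L lies in (q^(n-1) - 1)/(q - 1) planes; each of them contains a line
   of L, which meets m in a point and spans that plane together with m, so
   distinct planes give distinct lines of L and the sum of d over the nonzero
   vectors of m is at least q^(n-1) - 1.  Summing over all lines outside L, with
   b the number of lines through a point, gives
   (#lines - |L|)(q^(n-1) - 1) <= sum_v d(v) (b - d(v)).
   Since sum_v d(v) = |L| (q^2 - 1), Cauchy-Schwarz on sum_v d(v)^2 turns this
   into a quadratic inequality in |L|, whose smaller root is the claimed bound. *)

Lemma sum_card_rel (I J : finType) (A : {pred I}) (B : {pred J}) (r : I -> J -> bool)
    (w : J -> nat) :
  \sum_(i in A) \sum_(j in B | r i j) w j = \sum_(j in B) #|[set i in A | r i j]| * w j.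
Proof.
rewrite (exchange_big_dep [in B]) /=; last by move=> i j _ /andP[].
apply: eq_bigr => j jB; rewrite sum_nat_cond_const; congr (_ * _).
by apply: eq_card => i; rewrite !inE jB.
Qed.

Lemma double_count (I J : finType) (A : {pred I}) (B : {pred J}) (r : I -> J -> bool) :
  \sum_(i in A) #|[set j in B | r i j]| = \sum_(j in B) #|[set i in A | r i j]|.
Proof.
transitivity (\sum_(i in A) \sum_(j in B | r i j) 1).
  by apply: eq_bigr => i _; rewrite sum1dep_card; apply: eq_card => j; rewrite !inE.
by rewrite sum_card_rel; apply: eq_bigr => j _; rewrite muln1.
Qed.

Lemma sqrn_sum_leq (I : finType) (A : {pred I}) (x : I -> nat) :
  (\sum_(i in A) x i) ^ 2 <= #|A| * \sum_(i in A) x i ^ 2.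
Proof.
rewrite -(leq_pmul2l (isT : 0 < 2)).
apply: (@leq_trans (\sum_(i in A) \sum_(j in A) (x i ^ 2 + x j ^ 2))).
  rewrite -mulnn big_distrl big_distrr /=; apply: leq_sum => i _.
  by rewrite !big_distrr /=; apply: leq_sum => j _; apply: nat_Cauchy.
rewrite mul2n -addnn; under eq_bigr do rewrite big_split /=.
rewrite big_split /= leq_add //; last by rewrite sum_nat_const.
by apply: eq_leq; rewrite big_distrr; apply: eq_bigr => i _; rewrite sum_nat_const.
Qed.

(* [l] lies between the roots [Lam] and [N * A / K ^ 2] of a quadratic, and
   [A <= b * K] makes the latter the smaller root. *)
Lemma quadratic_lower_bound (N K A b Lam l s : nat) :
  Lam * K = N * b -> A <= b * K -> l <= Lam ->
  (Lam - l) * A + s <= b * (l * K) -> (l * K) ^ 2 <= N * s ->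
  N * A <= l * K ^ 2.
Proof.
move=> eLam le_A le_l le_s le_sqr.
have [-> | lt_l] := eqVneq l Lam.
  by rewrite expnS expn1 mulnA eLam -mulnA leq_mul2l le_A orbT.
have le_cross : N * ((Lam - l) * A) + (l * K) ^ 2 <= Lam * K * (l * K).
  apply: leq_trans (_ : N * ((Lam - l) * A + s) <= _); first by rewrite mulnDr leq_add2l.
  by rewrite eLam -mulnA leq_mul2l le_s orbT.
have split_Lam : Lam * K * (l * K) = (l * K) ^ 2 + (Lam - l) * (l * K ^ 2).
  by rewrite -{1}(subnKC le_l); nia.
rewrite split_Lam addnC leq_add2l mulnCA leq_pmul2l // in le_cross.
by rewrite subn_gt0 ltn_neqAle lt_l.
Qed.

Section Subspaces.
Variables (F : finFieldType) (n : nat).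
Local Notation V := (vec F n).
Local Notation q := #|F|.

Definition rowspace m (U : 'M[F]_(m, n.+1)) : {set V} := [set v : V | (v <= U)%MS].

Lemma is_subspaceP k (A : {set V}) :
  reflect (exists2 M : 'M[F]_(k, n.+1), \rank M = k & A = rowspace M) (is_subspace k A).
Proof.
apply: (iffP existsP) => [[M /andP[/eqP rkM /eqP ->]] | [M rkM ->]]; exists M => //.
by rewrite rkM !eqxx.
Qed.

Lemma rowspace_is_subspace m (U : 'M[F]_(m, n.+1)) : is_subspace (\rank U) (rowspace U).
Proof.
apply/is_subspaceP; exists (row_base U); first by rewrite eq_row_base.
by apply/setP => v; rewrite !inE eq_row_base.
Qed.

Lemma card_rowspace m (U : 'M[F]_(m, n.+1)) : #|rowspace U| = q ^ \rank U.
Proof.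
have -> : rowspace U = [set (x *m row_base U)%R | x : 'rV[F]_(\rank U)].
  apply/setP => v; rewrite inE; apply/idP/imsetP.
    by rewrite -(eq_row_base U) => /submxP [x ->]; exists x.
  by case=> x _ ->; rewrite (submx_trans (submxMl _ _)) ?eq_row_base.
by rewrite card_imset ?card_mx ?mul1n //; apply/row_free_inj/row_base_free.
Qed.

Lemma rowspace_subset m1 m2 (U : 'M[F]_(m1, n.+1)) (W : 'M[F]_(m2, n.+1)) :
  (rowspace U \subset rowspace W) = (U <= W)%MS.
Proof.
apply/subsetP/idP => [sUW | sUW v]; last by rewrite !inE => /submx_trans; apply.
by apply/row_subP => i; have := sUW (row i U); rewrite !inE row_sub; apply.
Qed.

Lemma mem_rowspace m (U : 'M[F]_(m, n.+1)) (v : V) :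
  (v \in rowspace U) = (rowspace v \subset rowspace U).
Proof. by rewrite rowspace_subset inE. Qed.

Lemma rowspace_eq m1 m2 (U : 'M[F]_(m1, n.+1)) (W : 'M[F]_(m2, n.+1)) :
  (U <= W)%MS -> (\rank W <= \rank U) -> rowspace U = rowspace W.
Proof.
move=> sUW rWU; have [le_rUW eq_rUW] := mxrank_leqif_eq sUW.
have /eqmxP eUW : (U == W)%MS by rewrite -eq_rUW eqn_leq le_rUW.
by apply/setP => v; rewrite !inE eUW.
Qed.

Lemma rowspaceI m1 m2 (U : 'M[F]_(m1, n.+1)) (W : 'M[F]_(m2, n.+1)) :
  rowspace (U :&: W)%MS = rowspace U :&: rowspace W.
Proof. by apply/setP => v; rewrite !inE sub_capmx. Qed.

Lemma rank_addsmx_notsub m (U : 'M[F]_(m, n.+1)) (v : V) :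
  ~~ (v <= U)%MS -> \rank (U + v)%MS = (\rank U).+1.
Proof.
move=> vNU; apply/anti_leq/andP; split.
  apply: leq_trans (mxrank_adds_leqif U v) _.
  by rewrite -[X in (_ <= X)]addn1 leq_add2l rank_leq_row.
have [le_rU eq_rU] := mxrank_leqif_sup (addsmxSl U v).
rewrite ltn_neqAle le_rU andbT eq_rU.
by apply: contra vNU; apply: submx_trans (addsmxSr U v).
Qed.

Definition superspaces m (U : 'M[F]_(m, n.+1)) : {set {set V}} :=
  [set W | is_subspace (\rank U).+1 W & rowspace U \subset W].

Lemma mem_superspace m (U : 'M[F]_(m, n.+1)) (v : V) W :
  ~~ (v <= U)%MS -> W \in superspaces U -> (v \in W) = (rowspace (U + v)%MS == W).
Proof.
move=> vNU; rewrite inE => /andP[/is_subspaceP[M rkM ->]]; rewrite rowspace_subset => sUM.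
apply/idP/eqP => [| <-]; last by rewrite inE addsmxSr.
rewrite inE => vM; apply: rowspace_eq; first by rewrite addsmx_sub sUM.
by rewrite rkM rank_addsmx_notsub.
Qed.

Lemma card_superspaces m (U : 'M[F]_(m, n.+1)) :
  #|superspaces U| * (q - 1) = q ^ (n.+1 - \rank U) - 1.
Proof.
set r := \rank U.
have card_sup : #|superspaces U| * (q ^ r.+1 - q ^ r) = q ^ n.+1 - q ^ r.
  have <- : #|~: rowspace U| = q ^ n.+1 - q ^ r.
    by rewrite cardsCs setCK card_rowspace card_mx mul1n.
  rewrite -[RHS]sum1_card (partition_big (fun v : V => rowspace (U + v)%MS) [in superspaces U]) /=.
    rewrite -sum_nat_const; apply: eq_bigr => W W_sup.
    move: (W_sup); rewrite inE => /andP[/is_subspaceP[M rkM eWM] sUW].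
    have -> : q ^ r.+1 - q ^ r = #|W :\: rowspace U|.
      by rewrite cardsD (setIidPr sUW) eWM !card_rowspace rkM.
    rewrite -sum1_card; apply: eq_bigl => v; rewrite !inE.
    by case vU: (v <= U)%MS; rewrite //= (mem_superspace (negbT vU) W_sup).
  move=> v; rewrite !inE => vNU; rewrite rowspace_subset addsmxSl andbT.
  by rewrite -(rank_addsmx_notsub vNU) rowspace_is_subspace.
have q_gt0 : 0 < q by apply/ltnW/card_finNzRing_gt1.
have e1 : q ^ r.+1 - q ^ r = q ^ r * (q - 1) by rewrite mulnBr muln1 expnSr.
have e2 : q ^ n.+1 - q ^ r = q ^ r * (q ^ (n.+1 - r) - 1).
  by rewrite mulnBr muln1 -expnD subnKC ?rank_leq_col.
by apply/eqP; rewrite -(@eqn_pmul2l (q ^ r)) ?expn_gt0 ?q_gt0 // mulnCA -e1 -e2 card_sup.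
Qed.

Definition lines_through (v : V) : {set {set V}} := [set l | is_line l & v \in l].
Definition planes_through (m : {set V}) : {set {set V}} := [set P | is_plane P & m \subset P].

Lemma card_lines_through (v : V) : v != 0%R -> #|lines_through v| * (q - 1) = q ^ n - 1.
Proof.
move=> v_nz; have rk_v : \rank v = 1 by rewrite rank_rV v_nz.
have -> : lines_through v = superspaces v.
  apply/setP => l; rewrite !inE rk_v; apply: andb_id2l => /is_subspaceP[M _ ->].
  by rewrite mem_rowspace.
by rewrite card_superspaces rk_v subSS subn0.
Qed.

Lemma card_planes_through (m : {set V}) :
  is_line m -> #|planes_through m| * (q - 1) = q ^ n.-1 - 1.
Proof.
case/is_subspaceP => M rkM ->.
have -> : planes_through (rowspace M) = superspaces M by apply/setP => P; rewrite !inE rkM.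
by rewrite card_superspaces rkM subSS (subn1 n).
Qed.

Lemma card_rowspace_nonzero m (U : 'M[F]_(m, n.+1)) :
  #|rowspace U :\ 0%R| = q ^ \rank U - 1.
Proof.
by rewrite -card_rowspace (cardsD1 0%R (rowspace U)) inE sub0mx add1n subn1.
Qed.

Lemma card_nonzero_vectors : #|[set: V] :\ 0%R| = q ^ n.+1 - 1.
Proof.
have -> : [set: V] = rowspace (1%:M : 'M[F]_n.+1)%R.
  by apply/setP => v; rewrite !inE submx1.
by rewrite card_rowspace_nonzero mxrank1.
Qed.

Lemma card_line_nonzero (l : {set V}) : is_line l -> #|l :\ 0%R| = q ^ 2 - 1.
Proof. by case/is_subspaceP => M rkM ->; rewrite card_rowspace_nonzero rkM. Qed.

Lemma lines_meet_in_plane (l m P : {set V}) : is_line l -> is_line m -> is_plane P ->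
  l \subset P -> m \subset P -> q - 1 <= #|l :&: m :\ 0%R|.
Proof.
case/is_subspaceP => C rkC -> /is_subspaceP[M rkM ->] /is_subspaceP[Pm rkP ->].
rewrite !rowspace_subset => sCP sMP; rewrite -rowspaceI card_rowspace_nonzero.
have rk_cap : 0 < \rank (C :&: M).
  have := mxrank_sum_cap C M; rewrite rkC rkM.
  have : \rank (C + M) <= 3 by rewrite -rkP mxrankS // addsmx_sub sCP.
  lia.
rewrite leq_sub2r // -{1}[q]expn1 leq_pexp2l //.
exact/ltnW/card_finNzRing_gt1.
Qed.

Lemma plane_spanned_by_lines (C M : 'M[F]_(2, n.+1)) (P : {set V}) :
  \rank C = 2 -> \rank M = 2 -> rowspace C != rowspace M -> is_plane P ->
  rowspace C \subset P -> rowspace M \subset P -> P = rowspace (C + M)%MS.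
Proof.
move=> rkC rkM CneM /is_subspaceP[Pm rkP ->]; rewrite !rowspace_subset => sCP sMP.
apply/esym/rowspace_eq; first by rewrite addsmx_sub sCP.
rewrite rkP leqNgt; apply: contra CneM => rk_le2.
by rewrite (rowspace_eq (addsmxSl C M)) ?rkC // (rowspace_eq (addsmxSr C M)) ?rkM.
Qed.

Lemma covers_planesP (L : {set {set V}}) :
  reflect ({subset L <= all_lines F n} /\
           forall P, is_plane P -> exists2 l, l \in L & l \subset P)
          (covers_planes L).
Proof.
apply: (iffP andP) => [[/forall_inP L_lines /forallP L_cover] | [L_lines L_cover]].
  split=> [l /L_lines | P P_plane]; first by rewrite inE.
  by have /implyP/(_ P_plane)/exists_inP[l lL lP] := L_cover P; exists l.
split; first by apply/forall_inP => l /L_lines; rewrite inE.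
apply/forallP => P; apply/implyP => /L_cover[l lL lP]; apply/exists_inP; by exists l.
Qed.

Lemma all_lines_cover : covers_planes (all_lines F n).
Proof.
apply/covers_planesP; split=> // _ /is_subspaceP[M rkM ->].
pose l_mx := ((pid_mx 2 : 'M[F]_(2, 3)) *m M)%R.
have rk_l : \rank l_mx = 2 by rewrite mxrankMfree ?rank_pid_mx // /row_free rkM.
exists (rowspace l_mx); last by rewrite rowspace_subset submxMl.
by have := rowspace_is_subspace l_mx; rewrite rk_l inE.
Qed.

Definition deg (L : {set {set V}}) (v : V) : nat := #|[set l in L | v \in l]|.

Lemma sum_deg (L : {set {set V}}) : {subset L <= all_lines F n} ->
  \sum_(v in [set: V] :\ 0%R) deg L v = #|L| * (q ^ 2 - 1).
Proof.
move=> L_lines; rewrite double_count -sum_nat_const; apply: eq_bigr => l lL.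
have l_line : is_line l by have := L_lines l lL; rewrite inE.
by rewrite -(card_line_nonzero l_line); apply: eq_card => v; rewrite !inE andbT.
Qed.

Definition lines_per_point : nat := \sum_(i < n) q ^ i.

Lemma lines_per_point_mul : lines_per_point * (q - 1) = q ^ n - 1.
Proof. by rewrite mulnC !subn1 predn_exp. Qed.

Lemma deg_all_lines (v : V) : v != 0%R -> deg (all_lines F n) v = lines_per_point.
Proof.
move=> v_nz; apply/eqP; rewrite -(@eqn_pmul2r (q - 1)) ?subn_gt0 ?card_finNzRing_gt1 //.
rewrite lines_per_point_mul -(card_lines_through v_nz).
by apply/eqP; congr (_ * _); apply: eq_card => l; rewrite !inE.
Qed.

Lemma card_all_lines_mul :
  #|all_lines F n| * (q ^ 2 - 1) = (q ^ n.+1 - 1) * lines_per_point.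
Proof.
rewrite -sum_deg // -card_nonzero_vectors -sum_nat_const.
by apply: eq_bigr => v; rewrite !inE andbT; apply: deg_all_lines.
Qed.

Section Cover.
Variable L : {set {set V}}.
Hypothesis L_lines : {subset L <= all_lines F n}.
Hypothesis L_cover : forall P, is_plane P -> exists2 l, l \in L & l \subset P.

Lemma sum_deg_uncovered_line (m : {set V}) : is_line m -> m \notin L ->
  q ^ n.-1 - 1 <= \sum_(v in m :\ 0%R) deg L v.
Proof.
move=> m_line mNL; rewrite -(card_planes_through m_line) -sum_nat_const.
pose c (P : {set V}) := odflt set0 [pick l in L | l \subset P].
have cP P : P \in planes_through m -> [/\ c P \in L, is_line (c P) & c P \subset P].
  rewrite inE => /andP[P_plane _]; rewrite /c; case: pickP => [l /andP[lL lP] | noL] /=.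
    by have := L_lines lL; rewrite inE.
  by have [l lL lP] := L_cover P_plane; have := noL l; rewrite lL lP.
have c_inj : {in planes_through m &, injective c}.
  move=> P1 P2 P1m P2m eP; have [cL /is_subspaceP[C rkC eC] cP1] := cP P1 P1m.
  have [_ _ cP2] := cP P2 P2m; rewrite -eP in cP2.
  move: P1m P2m m_line mNL; rewrite !inE => /andP[P1_plane mP1] /andP[P2_plane mP2].
  case/is_subspaceP => M rkM eM mNL.
  have CneM : rowspace C != rowspace M by rewrite -eC -eM; apply: contraNneq mNL => <-.
  rewrite eC eM in cP1 cP2 mP1 mP2.
  rewrite (plane_spanned_by_lines rkC rkM CneM P1_plane cP1 mP1).
  by rewrite (plane_spanned_by_lines rkC rkM CneM P2_plane cP2 mP2).
apply: (@leq_trans (\sum_(P in planes_through m) #|c P :&: m :\ 0%R|)).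
  apply: leq_sum => P Pm; have [_ cP_line cPP] := cP P Pm.
  by move: Pm; rewrite inE => /andP[P_plane mP]; apply: lines_meet_in_plane cPP mP.
rewrite -(big_imset (fun l => #|l :&: m :\ 0%R|) c_inj) /=.
have sub_cL : c @: planes_through m \subset L.
  by apply/subsetP => _ /imsetP[P Pm ->]; have [] := cP P Pm.
rewrite /deg (double_count (m :\ 0%R) L (fun v l => v \in l)).
rewrite [X in (_ <= X)](big_setID (c @: planes_through m)) (setIidPr sub_cL) /=.
apply: leq_trans (leq_addr _ _); apply: eq_leq; apply: eq_bigr => l _.
by apply: eq_card => v; rewrite !inE andbA andbAC.
Qed.

Lemma card_uncovered_lines_through (v : V) :
  #|[set m in all_lines F n :\: L | v \in m]| + deg L v = deg (all_lines F n) v.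
Proof.
rewrite /deg -(cardsID L [set l in all_lines F n | v \in l]) [RHS]addnC.
congr (_ + _); apply: eq_card => l; rewrite !inE; first by rewrite andbA.
case lL: (l \in L); rewrite /= ?andbF // andbT.
by have := L_lines lL; rewrite inE => ->.
Qed.

Lemma cover_incidence_bound :
  (#|all_lines F n| - #|L|) * (q ^ n.-1 - 1) + \sum_(v in [set: V] :\ 0%R) deg L v ^ 2
    <= lines_per_point * \sum_(v in [set: V] :\ 0%R) deg L v.
Proof.
have le_uncovered : (#|all_lines F n| - #|L|) * (q ^ n.-1 - 1)
    <= \sum_(v in [set: V] :\ 0%R) #|[set m in all_lines F n :\: L | v \in m]| * deg L v.
  have sub_L : L \subset all_lines F n by apply/subsetP.
  have -> : #|all_lines F n| - #|L| = #|all_lines F n :\: L|.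
    by rewrite cardsD (setIidPr sub_L).
  rewrite -(sum_card_rel _ _ (fun (m : {set V}) (v : V) => v \in m)) -sum_nat_const.
  apply: leq_sum => m; rewrite !inE => /andP[mNL m_line].
  apply: leq_trans (sum_deg_uncovered_line m_line mNL) _; apply: eq_leq.
  by apply: eq_bigl => v; rewrite !inE andbT.
apply: leq_trans (leq_add le_uncovered (leqnn _)) _.
rewrite -big_split big_distrr /=; apply: eq_leq; apply: eq_bigr => v.
rewrite !inE andbT => v_nz.
by rewrite -(deg_all_lines v_nz) -card_uncovered_lines_through mulnDl mulnn.
Qed.

Lemma cover_size_bound : (q ^ n.+1 - 1) * (q ^ n.-1 - 1) <= #|L| * (q ^ 2 - 1) ^ 2.
Proof.
have q_gt0 : 0 < q by apply/ltnW/card_finNzRing_gt1.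
have := cover_incidence_bound; rewrite sum_deg // => incidence.
have := sqrn_sum_leq ([set: V] :\ 0%R) (deg L).
rewrite sum_deg // card_nonzero_vectors => cauchy_schwarz.
apply: (quadratic_lower_bound card_all_lines_mul _ _ incidence cauchy_schwarz).
  apply: (@leq_trans (lines_per_point * (q - 1))).
    by rewrite lines_per_point_mul leq_sub2r // leq_pexp2l // leq_pred.
  by rewrite leq_mul2l leq_sub2r ?orbT // -{1}[q]expn1 leq_pexp2l.
by apply/subset_leq_card/subsetP.
Qed.

End Cover.

End Subspaces.

Theorem lemma4p3 (F : finFieldType) (n : nat) : (2 <= n)%N ->
  let q := #|F| in
  ((((q ^ n.+1 - 1) * (q ^ n.-1 - 1))%:R / ((q ^ 2 - 1) ^ 2)%:R : rat)
     <= (f F n)%:R)%R.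
Proof.
move=> _; cbv zeta.
have K_gt0 : 0 < (#|F| ^ 2 - 1) ^ 2.
  by rewrite expn_gt0 subn_gt0 -{1}(expn0 #|F|) ltn_exp2l ?card_finNzRing_gt1.
rewrite ler_pdivrMr ?ltr0n // -natrM ler_nat /f.
case: arg_minnP => [|L /covers_planesP[L_lines L_cover] _]; first exact: all_lines_cover.
exact: cover_size_bound.
Qed.
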